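(* Let $ubav$ be a word with $|ub| = i$ and attributes $(x_i,y_i)=(x_{i+1},y_{i+1})$ satisfying $x_i + y_i = k+1$. Then $ubav \sim_k uabv$.
   Context: $A$ is a finite alphabet, $a,b\in A$, and $k\in\mathbb{N}$. Simon's congruence $u\sim_k v$ holds iff $u$ and $v$ have the same (scattered) subwords of length at most $k$. An $\mathsf{X}$-ranker is a nonempty word over $\{\mathsf{X}_a : a\in A\}$ (''go to the next $a$-position'', starting with the first $a$-position) and a $\mathsf{Y}$-ranker a nonempty word over $\{\mathsf{Y}_a : a\in A\}$ (''go to the previous $a$-position'', starting with the last $a$-position). The attribute of position $i$ is $(x_i,y_i)$, where $x_i$ (resp. $y_i$) is the length of a shortest $\mathsf{X}$-ranker (resp. $\mathsf{Y}$-ranker) reaching $i$. *)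

(* Words are sequences over a finite alphabet A;
   positions are 1-indexed: position q (1 <= q <= size w) carries letter nth _ w q.-1. *)
From mathcomp Require Import all_boot.
Set Implicit Arguments. Unset Strict Implicit. Unset Printing Implicit Defensive.

Section Rankers.
Variable A : eqType.

Definition simon (k : nat) (u v : seq A) : Prop :=
  forall s : seq A, size s <= k -> subseq s u = subseq s v.

(* X_a from position p (0 = before the word): the next a-position q > p. *)
Definition xstep (w : seq A) (a : A) (p : nat) : option nat :=
  let t := drop p w in
  let j := find (pred1 a) t in
  if j < size t then Some (p + j).+1 else None.

(* Y_a from position p (size w + 1 = after the word): previous a-position q < p. *)
Definition ystep (w : seq A) (a : A) (p : nat) : option nat :=
  let t := rev (take p.-1 w) in
  let j := find (pred1 a) t in
  if j < size t then Some (p.-1 - j) else None.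

Fixpoint run (step : A -> nat -> option nat) (r : seq A) (p : nat) : option nat :=
  match r with
  | [::] => Some p
  | c :: r' => match step c p with
               | Some q => run step r' q
               | None => None
               end
  end.

Definition xreaches (w : seq A) (r : seq A) (i : nat) : Prop :=
  0 < size r /\ run (xstep w) r 0 = Some i.

Definition yreaches (w : seq A) (r : seq A) (i : nat) : Prop :=
  0 < size r /\ run (ystep w) r (size w).+1 = Some i.

Definition is_xattr (w : seq A) (i n : nat) : Prop :=
  (exists r, xreaches w r i /\ size r = n) /\
  (forall r, xreaches w r i -> n <= size r).

Definition is_yattr (w : seq A) (i n : nat) : Prop :=
  (exists r, yreaches w r i /\ size r = n) /\
  (forall r, yreaches w r i -> n <= size r).

End Rankers.

From mathcomp Require Import all_boot.
From mathcomp Require Import zify.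
Set Implicit Arguments.
Unset Strict Implicit.
Unset Printing Implicit Defensive.

(* A word s of length at most k separating u b a v from u a b v must, up to
   exchanging the two words, be s1 b a s2 where s1 embeds into u but s1 b does
   not, and s2 embeds into v but a s2 does not.  The X-ranker s1 b then follows
   the leftmost embedding of s1 b and stops at position i, and the Y-ranker
   (rev s2) a follows the rightmost embedding of a s2 and stops at i + 1, so
   x <= |s1| + 1 and y <= |s2| + 1, whence k + 1 = x + y <= |s|.  In the other
   direction s = s1 a b s2 and the rankers s1 a and (rev s2) b stop at i + 1
   and i respectively; this is why both positions need the attributes (x, y). *)

Section Embeddings.
Variable A : eqType.
Implicit Types (s t u v w : seq A) (a b c d : A).

Lemma xstep_cons_succ c w a p :
  xstep (c :: w) a p.+1 = omap succn (xstep w a p).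
Proof. by rewrite /xstep /=; case: ifP => //= _; rewrite addSn. Qed.

Lemma xstep_cons0 c w d :
  xstep (c :: w) d 0 = if d == c then Some 1 else omap succn (xstep w d 0).
Proof.
by rewrite /xstep /= drop0 eq_sym; case: eqP => //= _; rewrite ltnS; case: ifP.
Qed.

Lemma run_xstep_cons_succ c w r p :
  run (xstep (c :: w)) r p.+1 = omap succn (run (xstep w) r p).
Proof.
elim: r p => [|a r IHr] p //=.
by rewrite xstep_cons_succ; case: (xstep w a p) => //= q; apply: IHr.
Qed.

Lemma run_xstep_cons0 c w d r :
  run (xstep (c :: w)) (d :: r) 0 =
  omap succn (if d == c then run (xstep w) r 0 else run (xstep w) (d :: r) 0).
Proof.
rewrite /= xstep_cons0; case: eqP => _; first exact: run_xstep_cons_succ.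
by case: (xstep w d 0) => //= q; apply: run_xstep_cons_succ.
Qed.

Lemma xreaches_leftmost_embedding s u c t :
  subseq s u -> ~~ subseq (rcons s c) u ->
  xreaches (u ++ c :: t) (rcons s c) (size u).+1.
Proof.
move=> sub_s nsub_sc; split; first by rewrite size_rcons.
elim: u s sub_s nsub_sc => [|e u IHu] [|d s] sub_s nsub_sc //.
- by rewrite /= xstep_cons0 eqxx.
- rewrite /= in nsub_sc; rewrite cat_cons [rcons _ _]/= run_xstep_cons0.
  case: eqP nsub_sc => [_ | _ nsub_c]; first by rewrite sub0seq.
  by rewrite (IHu [::]) ?sub0seq.
- rewrite /= in sub_s nsub_sc; rewrite cat_cons rcons_cons run_xstep_cons0.
  by case: eqP sub_s nsub_sc => _ sub_s nsub_sc; rewrite -?rcons_cons IHu.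
Qed.

Lemma xstep_range w a p q : xstep w a p = Some q -> 0 < q <= size w.
Proof. by rewrite /xstep size_drop; case: ifP => // lt_p [<-]; lia. Qed.

Lemma ystep_xstep_rev w a p : 0 < p <= (size w).+1 ->
  ystep w a p = omap (subn (size w).+1) (xstep (rev w) a ((size w).+1 - p)).
Proof.
move=> p_range; rewrite /ystep /xstep drop_rev size_rev.
have -> : size w - ((size w).+1 - p) = p.-1 by lia.
by rewrite !size_rev; case: ifP => //= _; congr Some; lia.
Qed.

Lemma run_ystep_xstep_rev w r p : 0 < p <= (size w).+1 ->
  run (ystep w) r p =
  omap (subn (size w).+1) (run (xstep (rev w)) r ((size w).+1 - p)).
Proof.
elim: r p => [|a r IHr] p p_range /=; first by congr Some; lia.
rewrite ystep_xstep_rev //; case E: (xstep (rev w) a _) => [q|] //=.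
have := xstep_range E; rewrite size_rev => q_range.
by rewrite IHr; [congr omap; congr run; lia | lia].
Qed.

Lemma yreaches_rightmost_embedding s v c t :
  subseq s v -> ~~ subseq (c :: s) v ->
  yreaches (t ++ c :: v) (rcons (rev s) c) (size t).+1.
Proof.
rewrite -subseq_rev -[subseq (c :: s) v]subseq_rev rev_cons => sub_s nsub_cs.
split; first by rewrite size_rcons.
rewrite run_ystep_xstep_rev ?ltnSn // subnn rev_cat rev_cons cat_rcons.
have [_ ->] := xreaches_leftmost_embedding (rev t) sub_s nsub_cs.
by rewrite /= !size_cat /= size_rev; congr Some; lia.
Qed.

Lemma subseq_cat_split s w1 w2 : subseq s (w1 ++ w2) ->
  exists s1 s2, [/\ s = s1 ++ s2, subseq s1 w1 & subseq s2 w2].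
Proof.
case/subseqP => m size_m ->; rewrite size_cat in size_m.
exists (mask (take (size w1) m) w1), (mask (drop (size w1) m) w2).
split; try exact: mask_subseq.
by rewrite -mask_cat ?cat_take_drop // size_take size_m; case: ifP => //; lia.
Qed.

Lemma subseq_cons_head s c w : subseq s (c :: w) -> ~~ subseq s w ->
  exists2 s', s = c :: s' & subseq s' w.
Proof.
case: s => [|d s] /=; first by rewrite sub0seq.
by case: eqP => [-> sub_s _ | _ ->]; first exists s.
Qed.

Lemma subseq_cons2 c s w : subseq (c :: s) (c :: w) = subseq s w.
Proof. by rewrite /= eqxx. Qed.

Lemma subseq_cons_neq c d s w :
  c != d -> subseq (c :: s) (d :: w) = subseq (c :: s) w.
Proof. by move=> /negbTE /= ->. Qed.

Lemma subseq_rcons_neq c d s w :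
  c != d -> subseq (rcons s c) (rcons w d) = subseq (rcons s c) w.
Proof.
move=> neq_cd; rewrite -subseq_rev -[RHS]subseq_rev !rev_rcons.
exact: subseq_cons_neq.
Qed.

Lemma subseq_swap_split s u v a b :
  subseq s (u ++ b :: a :: v) -> ~~ subseq s (u ++ a :: b :: v) ->
  exists s1 s2, [/\ s = s1 ++ b :: a :: s2,
                    subseq s1 u, ~~ subseq (rcons s1 b) u,
                    subseq s2 v & ~~ subseq (a :: s2) v].
Proof.
case/subseq_cat_split => s1 [r [-> sub_s1 sub_r]] nsub_s.
have sub_bv : subseq (b :: v) (a :: b :: v) by apply: subseq_cons.
have sub_av : subseq (a :: v) (a :: b :: v) by rewrite subseq_cons2 subseq_cons.
have [r' def_r sub_r'] : exists2 r', r = b :: r' & subseq r' (a :: v).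
  apply: subseq_cons_head sub_r _; apply: contra nsub_s => sub_r.
  exact: cat_subseq sub_s1 (subseq_trans sub_r sub_av).
have [s2 def_r' sub_s2] : exists2 s2, r' = a :: s2 & subseq s2 v.
  apply: subseq_cons_head sub_r' _; apply: contra nsub_s => sub_r'.
  rewrite def_r; apply: cat_subseq sub_s1 (subseq_trans _ sub_bv).
  by rewrite subseq_cons2.
exists s1, s2; rewrite def_r def_r' in nsub_s *.
split=> //; apply: contra nsub_s => sub.
  rewrite -cat_rcons; apply: cat_subseq sub _.
  by rewrite subseq_cons2 (subseq_trans sub_s2) ?subseq_cons.
by apply: cat_subseq sub_s1 (subseq_trans _ sub_bv); rewrite subseq_cons2.
Qed.
End Embeddings.

Section AdjacentSwap.
Variables (A : eqType) (u v : seq A) (a b : A) (x y : nat).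

Lemma size_subseq_swap_ba s :
  (forall r, xreaches (u ++ b :: a :: v) r (size u).+1 -> x <= size r) ->
  (forall r, yreaches (u ++ b :: a :: v) r (size u).+2 -> y <= size r) ->
  subseq s (u ++ b :: a :: v) -> ~~ subseq s (u ++ a :: b :: v) ->
  x + y <= size s.
Proof.
move=> x_min y_min sub nsub.
have [s1 [s2 [-> sub_s1 nsub_s1b sub_s2 nsub_as2]]] :=
  subseq_swap_split sub nsub.
have x_le : x <= size (rcons s1 b).
  by apply: x_min; apply: xreaches_leftmost_embedding.
have y_le : y <= size (rcons (rev s2) a).
  apply: y_min; rewrite -cat_rcons -(size_rcons u b).
  exact: yreaches_rightmost_embedding.
by rewrite size_cat /=; rewrite !size_rcons size_rev in x_le y_le; lia.
Qed.

Lemma size_subseq_swap_ab s : a != b ->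
  (forall r, xreaches (u ++ b :: a :: v) r (size u).+2 -> x <= size r) ->
  (forall r, yreaches (u ++ b :: a :: v) r (size u).+1 -> y <= size r) ->
  subseq s (u ++ a :: b :: v) -> ~~ subseq s (u ++ b :: a :: v) ->
  x + y <= size s.
Proof.
move=> neq_ab x_min y_min sub nsub.
have [s1 [s2 [-> sub_s1 nsub_s1a sub_s2 nsub_bs2]]] :=
  subseq_swap_split sub nsub.
have x_le : x <= size (rcons s1 a).
  apply: x_min; rewrite -cat_rcons -(size_rcons u b).
  apply: xreaches_leftmost_embedding.
    exact: subseq_trans (subseq_rcons u b).
  by rewrite subseq_rcons_neq.
have y_le : y <= size (rcons (rev s2) b).
  apply: y_min; apply: yreaches_rightmost_embedding.
    exact: subseq_trans (subseq_cons v a).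
  by rewrite subseq_cons_neq // eq_sym.
by rewrite size_cat /=; rewrite !size_rcons size_rev in x_le y_le; lia.
Qed.
End AdjacentSwap.

Theorem proposition11 (A : finType) (u v : seq A) (a b : A) (k i x y : nat) :
  i = size (u ++ [:: b]) ->
  is_xattr (u ++ b :: a :: v) i x ->
  is_yattr (u ++ b :: a :: v) i y ->
  is_xattr (u ++ b :: a :: v) i.+1 x ->
  is_yattr (u ++ b :: a :: v) i.+1 y ->
  x + y = k.+1 ->
  simon k (u ++ b :: a :: v) (u ++ a :: b :: v).
Proof.
rewrite cats1 size_rcons => ->.
move=> [_ x_min_i] [_ y_min_i] [_ x_min_Si] [_ y_min_Si].
move=> xy s size_s; case: (eqVneq a b) => [-> // | neq_ab].
apply/idP/idP => sub; apply: contraTT size_s => nsub; rewrite -ltnNge.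
- by have := size_subseq_swap_ba x_min_i y_min_Si sub nsub; lia.
- by have := size_subseq_swap_ab neq_ab x_min_Si y_min_i sub nsub; lia.
Qed.
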